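(* Let $\mathbb{F}$ be a field of characteristic zero, let $J\ge0$ be an integer and $r,i$ integers with $r\ge2$, $1\le i\le r$. Define elements $N^J_{i,j,(r-1)d+j}\in\mathbb{F}[[q]]$ for integers $d\ge J+1$ and $1\le j\le r$ (indexed by the pair $(j,d)$) by the initial conditions $$N^J_{i,j,(r-1)(J+1)+j}=\begin{cases} q^{2(J+1)j-1}+q^{2(J+1)(j-1)} & 1\le j\le i-1,\\ q^{2(J+1)(j-1)} & j=i,\\ 0 & i+1\le j\le r,\end{cases}$$ and, for $d\ge J+1$ and $1\le j\le r$, the recursion $$N^J_{i,j,(r-1)(d+1)+j}=q^{2(d+1)(j-1)}\sum_{m=1}^{r-j+1}N^J_{i,m,(r-1)d+m}+q^{2(d+1)j-1}\sum_{m=1}^{r-j}N^J_{i,m,(r-1)d+m}.$$ Then for every integer $d\ge J+1$, $$\mathrm{HP}^{2J+1}_i=\sum_{j=1}^{r}N^J_{i,j,(r-1)d+j}\,\mathrm{HP}^{2d+1}_{r-j+1}.$$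
   Context: For $k\ge1$ let $S_k=\mathbb{F}[x_k,x_{k+1},x_{k+2},\ldots]$, graded by weight: the monomial $x_{i_1}^{\alpha_1}\cdots x_{i_m}^{\alpha_m}$ has weight $\sum_t i_t\alpha_t$. Fix $r\ge2$. For $k\ge1$, let $L_k$ be the ideal of $S_k$ generated by the monomials $x_{2a-1}^2$ ($2a-1\ge k$), $x_{2b-1}x_{2b}^{r-1}$ ($2b-1\ge k$), $x_{2c}^{r-n_1}x_{2c+2}^{n_1}$ ($2c\ge k$, $0\le n_1\le r-1$), and $x_{2c}^{r-n_2-1}x_{2c+1}x_{2c+2}^{n_2}$ ($2c\ge k$, $0\le n_2\le r-2$), where $a,b,c$ range over integers. For $1\le \ell\le r$ define the ideal $L_k^{\ell}$ of $S_k$ as follows: if $k$ is even, $L_k^\ell$ is generated by $x_k^{\ell}$, the monomials $x_k^{\ell-t}x_{k+2}^{r-\ell+t}$ and $x_k^{\ell-t}x_{k+1}x_{k+2}^{r-\ell+t-1}$ for $t=1,\ldots,\ell-1$, and the generators of $L_{k+1}$; if $k$ is odd, $L_k^\ell$ is generated by $x_k^2$, $x_kx_{k+1}^{\ell-1}$, and the generators of $L_{k+1}^{\ell}$. For a graded algebra $A=\bigoplus_{j\ge0}A_j$ with finite-dimensional components, its Hilbert–Poincaré series is $\sum_{j\ge0}\dim_{\mathbb{F}}(A_j)q^j$. Write $\mathrm{HP}^k_\ell$ for the Hilbert–Poincaré series of $S_k/L_k^\ell$ (a formal power series in $q$). *)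

From mathcomp Require Import all_boot all_order all_algebra.
Set Implicit Arguments. Unset Strict Implicit. Unset Printing Implicit Defensive.
Import GRing.Theory.
Local Open Scope ring_scope.

Definition qpow (R : nzRingType) (e : nat) : nat -> R := fun n => (n == e)%:R.
Definition smul (R : nzRingType) (f g : nat -> R) : nat -> R :=
  fun n => \sum_(a < n.+1) f a * g (n - a)%N.
Definition sadd (R : nzRingType) (f g : nat -> R) : nat -> R := fun n => f n + g n.
Definition szero (R : nzRingType) : nat -> R := fun _ => 0.

(* A monomial is an exponent function e : nat -> nat (e p = exponent of x_p).
   Divisibility by a generator = componentwise comparison of exponents.
   [inL r k N e] : e is divisible by some generator of L_k whose smallest
   variable index p is < N (every generator of L_k involves x_p, p its
   smallest index, with positive exponent, so for a monomial supported
   on indices < N this is exactly membership in L_k). *)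
Definition inL (r k N : nat) (e : nat -> nat) : bool :=
  has (fun p =>
    (k <= p)%N &&
    (if odd p then
        (* x_{2a-1}^2 ,  x_{2b-1} x_{2b}^{r-1} *)
        (2 <= e p)%N || ((1 <= e p) && (r - 1 <= e p.+1))%N
     else
        (* x_{2c}^{r-n1} x_{2c+2}^{n1}, 0 <= n1 <= r-1 *)
        has (fun n1 => (r - n1 <= e p) && (n1 <= e p.+2))%N (iota 0 r)
        (* x_{2c}^{r-n2-1} x_{2c+1} x_{2c+2}^{n2}, 0 <= n2 <= r-2 *)
     || has (fun n2 => [&& r - n2 - 1 <= e p, 1 <= e p.+1 & n2 <= e p.+2])%N
            (iota 0 (r - 1))))
    (iota 0 N).

(* generators of L_k^l for k even, other than those of L_{k+1} *)
Definition inLl_even_extra (r l k : nat) (e : nat -> nat) : bool :=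
  [|| (l <= e k)%N,
      has (fun t => (l - t <= e k) && (r - l + t <= e k.+2))%N (iota 1 (l - 1))
    | has (fun t => [&& l - t <= e k, 1 <= e k.+1 & r - l + t - 1 <= e k.+2])%N
          (iota 1 (l - 1))].

Definition inLl (r l k N : nat) (e : nat -> nat) : bool :=
  if odd k then
    [|| (2 <= e k)%N, ((1 <= e k) && (l - 1 <= e k.+1))%N,
        inLl_even_extra r l k.+1 e | inL r k.+2 N e]
  else inLl_even_extra r l k e || inL r k.+1 N e.

(* A monomial of weight j only involves x_1..x_j with exponents <= j:
   encode it as a finite function 'I_j.+1 -> 'I_j.+1 (index 0 unused). *)
Definition extexp (j : nat) (e : {ffun 'I_j.+1 -> 'I_j.+1}) : nat -> nat :=
  fun p => match insub p with Some i => nat_of_ord (e i) | None => 0%N end.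

(* monomials of S_k (variables x_k, x_{k+1}, ...) of weight j *)
Definition monoS (k j : nat) (e : {ffun 'I_j.+1 -> 'I_j.+1}) : bool :=
  [forall p : 'I_j.+1, ((p == 0 :> nat) || (p < k)%N) ==> (e p == 0 :> nat)]
  && ((\sum_(p < j.+1) p * e p)%N == j).

(* dim_F (S_k / L_k^l)_j = number of standard monomials (monomials of S_k of
   weight j not in the monomial ideal L_k^l). *)
Definition hpcoef (r l k j : nat) : nat :=
  #|[set e : {ffun 'I_j.+1 -> 'I_j.+1} | @monoS k j e && ~~ inLl r l k j.+1 (extexp e)]|.

Definition HP (R : nzRingType) (r k l : nat) : nat -> R := fun j => (hpcoef r l k j)%:R.

(* N^J_{i,j,(r-1)(J+1+s)+j}, i.e. d = J+1+s *)
Fixpoint Nser (R : nzRingType) (r i J s : nat) (j : nat) {struct s} : nat -> R :=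
  match s with
  | 0%N =>
      if (j < i)%N then sadd (qpow R (2 * J.+1 * j - 1)) (qpow R (2 * J.+1 * (j - 1)))
      else if j == i then qpow R (2 * J.+1 * (j - 1))
      else szero R
  | s'.+1 =>
      let d := (J.+1 + s')%N in
      sadd
        (smul (qpow R (2 * d.+1 * (j - 1)))
              (fun n => \sum_(1 <= m < (r - j + 1).+1) Nser R r i J s' m n))
        (smul (qpow R (2 * d.+1 * j - 1))
              (fun n => \sum_(1 <= m < (r - j).+1) Nser R r i J s' m n))
  end.

Definition NJ (R : nzRingType) (r i J d j : nat) : nat -> R := Nser R r i J (d - J.+1) j.

From mathcomp Require Import all_boot all_order all_algebra.
From mathcomp Require Import zify.
Import GRing.Theory.
Set Implicit Arguments. Unset Strict Implicit. Unset Printing Implicit Defensive.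

(* For odd k, a monomial of S_k factors as x_k^a x_{k+1}^b m with m in S_{k+2},
   and it lies outside L_k^l exactly when a <= 1, a + b < l and m lies outside
   L_{k+2}^{r-b}. Counting standard monomials by the pair (a, b) gives
     HP^k_l = sum_{b<l} q^{(k+1)b} HP^{k+2}_{r-b} + sum_{b<l-1} q^{k+(k+1)b} HP^{k+2}_{r-b}.
   Inserting this recursion, at k = 2d+1 and l = r-j+1, into the expansion at
   level d and exchanging the resulting double sum over the triangle of pairs
   (j, m = b+1) with j + m <= r + 1 produces the expansion at level d+1 with
   precisely the recursion defining N^J; the initial values are the same
   recursion applied once at k = 2J+1.
   The identity holds coefficientwise in nat, so the characteristic of F is
   irrelevant. *)

(* [inL_at r p u v w]: x_p^u x_{p+1}^v x_{p+2}^w is divisible by a generator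
   of L whose least variable is x_p. *)
Definition inL_at (r p u v w : nat) : bool :=
  if odd p then (2 <= u) || (1 <= u) && (r - 1 <= v)
  else has (fun n1 => (r - n1 <= u) && (n1 <= w)) (iota 0 r)
    || has (fun n2 => [&& r - n2 - 1 <= u, 1 <= v & n2 <= w]) (iota 0 (r - 1)).

Definition inL_even (r u v w : nat) : bool :=
  (0 < u) && ((r <= u + w) || (0 < v) && (r <= u + w + 1)).

Lemma inLE r k N e :
  inL r k N e = has (fun p => (k <= p) && inL_at r p (e p) (e p.+1) (e p.+2)) (iota 0 N).
Proof. by []. Qed.

Lemma inL_at_gt0 r p u v w : inL_at r p u v w -> 0 < u.
Proof.
rewrite /inL_at; case: odd; first by case/orP => [|/andP[]]; lia.
by case/orP => /hasP[n]; rewrite mem_iota; lia.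
Qed.

Lemma inL_at_even r p u v w : 1 < r -> ~~ odd p -> inL_at r p u v w = inL_even r u v w.
Proof.
rewrite /inL_at /inL_even => r_gt1 /negbTE ->; apply/idP/idP.
  by case/orP => /hasP[n]; rewrite mem_iota; lia.
case/andP => u_gt0 /orP[uw_ge | /andP[v_gt0 uw_ge]]; apply/orP; [left | right].
  by apply/hasP; exists (r - u); rewrite ?mem_iota; lia.
by apply/hasP; exists (r - 1 - u); rewrite ?mem_iota; lia.
Qed.

Lemma inLl_even_extraE r l k e : 0 < l <= r ->
  inLl_even_extra r l k e = (l <= e k) || inL_even r (e k) (e k.+1) (e k.+2).
Proof.
rewrite /inLl_even_extra /inL_even => l_range.
case: (leqP l (e k)) => [// | ek_lt] /=; apply/idP/idP.
  by case/orP => /hasP[t]; rewrite mem_iota; lia.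
case/andP => ek_gt0 /orP[ew_ge | /andP[v_gt0 ew_ge]]; apply/orP; [left | right].
  by apply/hasP; exists (l - e k); rewrite ?mem_iota; lia.
by apply/hasP; exists (l - e k); rewrite ?mem_iota; lia.
Qed.

Lemma inLP r k N e :
  reflect (exists2 p, k <= p < N & inL_at r p (e p) (e p.+1) (e p.+2)) (inL r k N e).
Proof.
rewrite inLE; apply: (iffP hasP) => [[p] | [p]].
  by rewrite mem_iota => p_lt /andP[k_le Lp]; exists p => //; lia.
by move=> /andP[k_le p_lt] Lp; exists p; rewrite ?mem_iota ?k_le //; lia.
Qed.

Lemma inL_peel r k N e : k < N ->
  inL r k N e = inL_at r k (e k) (e k.+1) (e k.+2) || inL r k.+1 N e.
Proof.
move=> k_lt; apply/inLP/orP => [[p /andP[k_le p_lt] Lp] | [Lk | /inLP[p p_range Lp]]].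
- have [<- | p_neq] := eqVneq p k; first by left.
  by right; apply/inLP; exists p => //; lia.
- by exists k; rewrite ?leqnn.
- by exists p => //; lia.
Qed.

Lemma inL_bound r k N B e : (forall p, B <= p -> e p = 0) -> B <= N ->
  inL r k N e = inL r k B e.
Proof.
move=> e_supp B_le; apply/inLP/inLP => -[p /andP[k_le p_lt] Lp]; exists p => //.
  by rewrite k_le /=; case: (ltnP p B) (inL_at_gt0 Lp) => // /e_supp ->.
by rewrite k_le; lia.
Qed.

Lemma eq_inL r k N e e' : {in [pred p | k <= p], e =1 e'} -> inL r k N e = inL r k N e'.
Proof.
move=> ee'; rewrite !inLE; apply: eq_in_has => p _ /=.
by case k_le: (k <= p) => //=; rewrite !ee' // inE; lia.
Qed.

Lemma inLl_bound r l k N B e : (forall p, B <= p -> e p = 0) -> B <= N ->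
  inLl r l k N e = inLl r l k B e.
Proof.
by move=> e_supp B_le; rewrite /inLl (inL_bound _ _ e_supp B_le) (inL_bound _ _ e_supp B_le).
Qed.

Lemma eq_inLl r l k N e e' :
  {in [pred p | k <= p], e =1 e'} -> inLl r l k N e = inLl r l k N e'.
Proof.
move=> ee'; have ee'_ge p : k <= p -> e p = e' p by move=> kp; apply: ee'.
have eqL j : k <= j -> inL r j N e = inL r j N e'.
  by move=> kj; apply: eq_inL => p; rewrite inE => jp; apply: ee'_ge; lia.
rewrite /inLl /inLl_even_extra.
by case: odd; rewrite !(ee'_ge k, ee'_ge k.+1, ee'_ge k.+2, ee'_ge k.+3) ?eqL //; lia.
Qed.

Lemma inLl_peel r l k N e : 1 < r -> 0 < l <= r -> odd k -> k.+3 < N ->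
  inLl r l k N e =
  [|| 2 <= e k, (0 < e k) && (l.-1 <= e k.+1), l <= e k.+1
    | inLl r (r - e k.+1) k.+2 N e].
Proof.
move=> r_gt1 l_range k_odd k3_lt.
have [l_le | b_lt] := leqP l (e k.+1).
  by rewrite /inLl k_odd /inLl_even_extra l_le !orbT.
rewrite /inLl /= k_odd /= (inLl_even_extraE _ _ l_range) inLl_even_extraE; last lia.
rewrite (@inL_peel _ k.+2) 1?(@inL_peel _ k.+3); try lia.
have k3_even : ~~ odd k.+3 by rewrite /= !negbK.
have k2_odd : odd k.+2 by rewrite /= negbK.
by rewrite (inL_at_even _ _ _ r_gt1 k3_even) /inL_at k2_odd /inL_even; lia.
Qed.

Lemma extexp_ord m (e : {ffun 'I_m.+1 -> 'I_m.+1}) (i : 'I_m.+1) : extexp e i = e i.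
Proof. by rewrite /extexp valK. Qed.

Lemma extexp_out m (e : {ffun 'I_m.+1 -> 'I_m.+1}) p : m < p -> extexp e p = 0.
Proof. by move=> m_lt; rewrite /extexp insubF //; apply/negbTE; rewrite -leqNgt. Qed.

Lemma extexp_le m (e : {ffun 'I_m.+1 -> 'I_m.+1}) p : extexp e p <= m.
Proof.
case: (ltnP m p) => [m_lt | p_le]; first by rewrite extexp_out.
by rewrite -[p]/(nat_of_ord (Ordinal (p_le : p < m.+1))) extexp_ord -ltnS.
Qed.

Lemma extexp_inj m (e1 e2 : {ffun 'I_m.+1 -> 'I_m.+1}) : extexp e1 =1 extexp e2 -> e1 = e2.
Proof. by move=> e12; apply/ffunP => i; apply: val_inj; rewrite /= -!extexp_ord. Qed.

Lemma card_in_bij (T T' : finType) (A : {pred T}) (B : {pred T'})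
    (f : T -> T') (g : T' -> T) :
  {in A, forall x, f x \in B} -> {in B, forall y, g y \in A} ->
  {in A, cancel f g} -> {in B, cancel g f} -> #|A| = #|B|.
Proof.
move=> fAB gBA fK gK; rewrite -(card_in_imset (can_in_inj fK)).
apply: eq_card => y; apply/imsetP/idP => [[x xA ->] | yB]; first exact: fAB.
by exists (g y); [apply: gBA | rewrite gK].
Qed.

Lemma card_fibers (T : finType) (A : {pred T}) (g : T -> nat) m :
  {in A, forall x, g x < m} -> #|A| = \sum_(c < m) #|[pred x in A | g x == c]|.
Proof.
move=> g_lt; rewrite -sum1_card.
transitivity (\sum_(x in A) \sum_(c < m) (g x == c : nat)).
  apply: eq_bigr => x xA; rewrite (bigD1 (Ordinal (g_lt x xA))) //= eqxx big1 // => c.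
  move=> c_neq; apply/eqP; rewrite eqb0; apply: contra c_neq => /eqP gc.
  exact/eqP/val_inj.
rewrite exchange_big; apply: eq_bigr => c _; rewrite -sum1_card big_mkcondr.
by apply: eq_big => [x | x _]; rewrite ?inE //; case: eqP.
Qed.

Definition weight (N : nat) (f : nat -> nat) : nat := \sum_(p < N) p * f p.

Definition standard (r l k N n : nat) (f : nat -> nat) : bool :=
  [forall p : 'I_N, ((p : nat) == 0) || (p < k) ==> (f p == 0)]
  && (weight N f == n) && ~~ inLl r l k N f.

Definition nstandard (M r l k n : nat) : nat :=
  #|[pred e : {ffun 'I_M.+1 -> 'I_M.+1} | standard r l k M.+1 n (extexp e)]|.

Lemma eq_standard r l k N n f g : f =1 g -> standard r l k N n f = standard r l k N n g.
Proof.
move=> fg; rewrite /standard /weight (@eq_inLl _ _ _ _ f g); last exact: in1W.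
by under eq_forallb => p do rewrite fg; under eq_bigr => p _ do rewrite fg.
Qed.

Lemma standard_bound r l k N B n f : (forall p, B <= p -> f p = 0) -> B <= N ->
  standard r l k N n f = standard r l k B n f.
Proof.
move=> f_supp B_le; rewrite /standard (inLl_bound _ _ _ f_supp B_le).
have -> : weight N f = weight B f.
  rewrite /weight [RHS](big_ord_widen N (fun p => p * f p) B_le) [RHS]big_mkcond.
  by apply: eq_bigr => p _; case: ltnP => // /f_supp ->; rewrite muln0.
congr (_ && _ && _); apply/forallP/forallP => f0 p.
  exact: f0 (widen_ord B_le p).
case: (ltnP p B) => [p_lt | /f_supp ->]; last by rewrite implybT.
exact: f0 (Ordinal p_lt).
Qed.

Lemma standard_support r l k N n f : (forall p, N <= p -> f p = 0) ->
  standard r l k N n f -> forall p, f p <= n /\ (n < p -> f p = 0).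
Proof.
move=> f_supp /andP[/andP[/forallP f0 /eqP wt] _] p.
case: (ltnP p N) => [p_lt | /f_supp ->]; last by [].
have pf_le : p * f p <= n by rewrite -wt /weight (bigD1 (Ordinal p_lt)) //= leq_addr.
case: p p_lt pf_le => [|p] p_lt pf_le.
  by have /eqP -> := f0 (Ordinal p_lt).
by split; nia.
Qed.

Lemma standard_below r l k N n f p : p < N -> p < k -> standard r l k N n f -> f p = 0.
Proof.
move=> p_lt p_lt_k /andP[/andP[/forallP f0 _] _].
by have := f0 (Ordinal p_lt); rewrite /= p_lt_k orbT => /eqP.
Qed.

Lemma card_extexp_resize m M (P : pred (nat -> nat)) : m <= M ->
  (forall f g, f =1 g -> P f = P g) ->
  (forall e : {ffun 'I_M.+1 -> 'I_M.+1}, P (extexp e) ->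
     forall p, extexp e p <= m /\ (m < p -> extexp e p = 0)) ->
  #|[pred e : {ffun 'I_m.+1 -> 'I_m.+1} | P (extexp e)]|
  = #|[pred e : {ffun 'I_M.+1 -> 'I_M.+1} | P (extexp e)]|.
Proof.
move=> m_le P_ext P_small.
pose resize n m' (e : {ffun 'I_m'.+1 -> 'I_m'.+1}) : {ffun 'I_n.+1 -> 'I_n.+1} :=
  [ffun i : 'I_n.+1 => inord (extexp e i)].
have resizeE n m' (e : {ffun 'I_m'.+1 -> 'I_m'.+1}) :
    (forall p, extexp e p <= n /\ (n < p -> extexp e p = 0)) ->
    extexp (resize n m' e) =1 extexp e.
  move=> e_small p; have [e_le e_out] := e_small p.
  case: (ltnP n p) => [n_lt | p_le]; first by rewrite extexp_out ?e_out.
  by rewrite -[p]/(nat_of_ord (Ordinal (p_le : p < n.+1))) extexp_ord ffunE inordK.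
have small (e : {ffun 'I_m.+1 -> 'I_m.+1}) p : extexp e p <= m /\ (m < p -> extexp e p = 0).
  by split; [exact: extexp_le | exact: extexp_out].
have up (e : {ffun 'I_m.+1 -> 'I_m.+1}) : extexp (resize M m e) =1 extexp e.
  apply: resizeE => p; have [e_le e_out] := small e p.
  by split => [|M_lt]; [exact: leq_trans e_le m_le | apply: e_out; lia].
apply: (@card_in_bij _ _ _ _ (resize M m) (resize m M)) => [e | e | e _ | e Pe];
  rewrite ?inE.
- by rewrite (P_ext _ _ (up e)).
- by move=> Pe; rewrite (P_ext _ _ (resizeE _ _ _ (P_small _ Pe))).
- by apply: extexp_inj => p; rewrite resizeE ?up // => q; rewrite up.
- by apply: extexp_inj => p; rewrite up resizeE //; apply: P_small.
Qed.

Lemma hpcoef_nstandard M r l k n : n <= M -> hpcoef r l k n = nstandard M r l k n.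
Proof.
move=> n_le; rewrite /nstandard -(card_extexp_resize n_le); last 2 first.
- exact: eq_standard.
- by move=> e; apply: standard_support => p; apply: extexp_out.
rewrite /hpcoef; apply: eq_card => e; rewrite !inE.
rewrite (standard_bound _ _ _ _ (extexp_out e)) //.
rewrite /standard /monoS /weight; congr (_ && _ && _).
  by apply: eq_forallb => p; rewrite extexp_ord.
by congr (_ == _); apply: eq_bigr => p _; rewrite extexp_ord.
Qed.

Definition upd2 (k a b : nat) (f : nat -> nat) : nat -> nat :=
  fun p => if p == k then a else if p == k.+1 then b else f p.

Definition setexp2 M (e : {ffun 'I_M.+1 -> 'I_M.+1}) (k a b : nat) :
    {ffun 'I_M.+1 -> 'I_M.+1} :=
  [ffun i : 'I_M.+1 =>
     if (i : nat) == k then inord a else if (i : nat) == k.+1 then inord b else e i].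

Lemma upd2_id k f : upd2 k (f k) (f k.+1) f =1 f.
Proof. by move=> p; rewrite /upd2; case: eqP => [-> | _] //; case: eqP => [-> |]. Qed.

Lemma extexp_setexp2 M (e : {ffun 'I_M.+1 -> 'I_M.+1}) k a b :
  k < M -> a <= M -> b <= M ->
  extexp (setexp2 e k a b) =1 upd2 k a b (extexp e).
Proof.
move=> k_lt a_le b_le p; rewrite /upd2.
case: (ltnP M p) => [M_lt | p_le]; first by rewrite !extexp_out // !ifN_eq //; lia.
rewrite -[p]/(nat_of_ord (Ordinal (p_le : p < M.+1))) !extexp_ord ffunE /=.
by case: eqP => _; [|case: eqP => _]; rewrite ?inordK.
Qed.

Lemma setexp2_setexp2 M (e : {ffun 'I_M.+1 -> 'I_M.+1}) k a b a' b' :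
  setexp2 (setexp2 e k a' b') k a b = setexp2 e k a b.
Proof. by apply/ffunP => i; rewrite !ffunE; case: eqP => // _; case: eqP. Qed.

Lemma setexp2_id M (e : {ffun 'I_M.+1 -> 'I_M.+1}) k : k < M ->
  setexp2 e k (extexp e k) (extexp e k.+1) = e.
Proof.
move=> k_lt; apply: extexp_inj => p.
by rewrite extexp_setexp2 ?extexp_le // upd2_id.
Qed.

Lemma weight_upd2 N k a b f : k.+1 < N ->
  weight N (upd2 k a b f) = weight N (upd2 k 0 0 f) + (k * a + k.+1 * b).
Proof.
move=> k1_lt; have point c x : c < N -> \sum_(p < N) p * (((p : nat) == c) * x) = c * x.
  move=> c_lt; rewrite (bigD1 (Ordinal c_lt)) //= eqxx mul1n big1 ?addn0 // => p.
  by rewrite -val_eqE /= => /negbTE ->; rewrite muln0.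
rewrite -(point k a) 1?ltnW // -(point k.+1 b) // -!big_split /=.
apply: eq_bigr => p _; rewrite /upd2.
case: eqP => [-> | _]; first by rewrite eqn_leq ltnn; lia.
by case: eqP => [-> | _]; lia.
Qed.

Section Peel.
Variables (r l k N : nat).
Hypotheses (r_gt1 : 1 < r) (l_range : 0 < l <= r) (k_odd : odd k) (k3_lt : k.+3 < N).

Lemma standard_exps_bound n f : standard r l k N n f -> f k < 2 /\ f k + f k.+1 < l.
Proof.
case/andP => _; rewrite inLl_peel // !negb_or => /and4P[e0 e01 e1 _].
split; lia.
Qed.

Lemma standard_upd2 n a b f : a < 2 -> a + b < l ->
  standard r l k N n (upd2 k a b f)
  = (k * a + k.+1 * b <= n)
    && standard r (r - b) k.+2 N (n - (k * a + k.+1 * b)) (upd2 k 0 0 f).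
Proof.
move=> a_lt ab_lt; have k_gt0 : 0 < k by case: k k_odd.
have upd2_k : upd2 k a b f k = a by rewrite /upd2 eqxx.
have upd2_k1 : upd2 k a b f k.+1 = b by rewrite /upd2 ifN_eq ?eqxx //; lia.
rewrite /standard inLl_peel // upd2_k upd2_k1 weight_upd2; last lia.
rewrite (@eq_inLl _ _ _ _ (upd2 k a b f) (upd2 k 0 0 f)); last first.
  by move=> p; rewrite inE => kp; rewrite /upd2 !ifN_eq //; lia.
have -> : [forall p : 'I_N, ((p : nat) == 0) || (p < k) ==> (upd2 k a b f p == 0)]
        = [forall p : 'I_N, ((p : nat) == 0) || (p < k.+2) ==> (upd2 k 0 0 f p == 0)].
  apply: eq_forallb => p; rewrite /upd2.
  have [-> | ?] := eqVneq (p : nat) k; first by rewrite /=; lia.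
  by have [-> | ?] := eqVneq (p : nat) k.+1; rewrite /=; lia.
lia.
Qed.
End Peel.

Lemma card_fiber M r l k n a b :
  1 < r -> 0 < l <= r -> odd k -> n <= M -> k.+3 <= M -> r <= M -> a < 2 -> a + b < l ->
  #|[pred e : {ffun 'I_M.+1 -> 'I_M.+1} |
     standard r l k M.+1 n (extexp e) && (extexp e k == a) && (extexp e k.+1 == b)]|
  = if k * a + k.+1 * b <= n then hpcoef r (r - b) k.+2 (n - (k * a + k.+1 * b)) else 0.
Proof.
move=> r_gt1 l_range k_odd n_le k3_le r_le a_lt ab_lt; set w := k * a + k.+1 * b.
have [k_lt a_le b_le] : [/\ k < M, a <= M & b <= M] by split; lia.
have set_upd (e : {ffun 'I_M.+1 -> 'I_M.+1}) c d :
    c <= M -> d <= M -> extexp (setexp2 e k c d) =1 upd2 k c d (extexp e).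
  by move=> c_le d_le; apply: extexp_setexp2.
have std_set (e : {ffun 'I_M.+1 -> 'I_M.+1}) :
    standard r l k M.+1 n (extexp (setexp2 e k a b))
    = (w <= n) && standard r (r - b) k.+2 M.+1 (n - w) (extexp (setexp2 e k 0 0)).
  rewrite !(eq_standard _ _ _ _ _ (set_upd e _ _ _ _)) // standard_upd2 //; lia.
have fiberK (e : {ffun 'I_M.+1 -> 'I_M.+1}) :
    extexp e k = a -> extexp e k.+1 = b -> setexp2 e k a b = e.
  by move=> <- <-; apply: setexp2_id.
have std0K (e : {ffun 'I_M.+1 -> 'I_M.+1}) :
    standard r (r - b) k.+2 M.+1 (n - w) (extexp e) -> setexp2 e k 0 0 = e.
  move=> std; have zero p : p < k.+2 -> extexp e p = 0.
    by move=> p_lt; apply: standard_below std => //; lia.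
  by rewrite -{2}(setexp2_id e k_lt) !zero.
have [w_le | w_gt] := leqP w n; last first.
  apply: eq_card0 => e; rewrite !inE; apply/negP => /andP[/andP[std /eqP ek] /eqP ek1].
  by move: std; rewrite -{1}(fiberK e) // std_set leqNgt w_gt.
rewrite (hpcoef_nstandard (M := M)) /nstandard; last lia.
apply: (@card_in_bij _ _ _ _ (fun e => setexp2 e k 0 0) (fun e => setexp2 e k a b))
  => e; rewrite !inE.
- case/andP=> /andP[std /eqP ek] /eqP ek1.
  by move: std; rewrite -{1}(fiberK e) // std_set w_le.
- move=> std; rewrite std_set w_le std0K // std !set_upd // /upd2 eqxx ifN_eq ?eqxx //.
  lia.
- by case/andP=> /andP[_ /eqP ek] /eqP ek1; rewrite setexp2_setexp2 fiberK.
- by move=> std; rewrite setexp2_setexp2 std0K.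
Qed.

Lemma hpcoef_rec r l k n : 1 < r -> 0 < l <= r -> odd k ->
  hpcoef r l k n = \sum_(a < 2) \sum_(b < l - a)
    (if k * a + k.+1 * b <= n then hpcoef r (r - b) k.+2 (n - (k * a + k.+1 * b)) else 0).
Proof.
move=> r_gt1 l_range k_odd; pose M := n + k + r + 3.
pose A := [pred e : {ffun 'I_M.+1 -> 'I_M.+1} | standard r l k M.+1 n (extexp e)].
have exps_bound e : e \in A -> extexp e k < 2 /\ extexp e k + extexp e k.+1 < l.
  by rewrite inE; apply: standard_exps_bound => //; lia.
rewrite (hpcoef_nstandard (M := M)); last lia.
rewrite /nstandard -/A (card_fibers (g := fun e => extexp e k) (m := 2)); last first.
  by move=> e /exps_bound[].
apply: eq_bigr => a _.
rewrite (card_fibers (g := fun e => extexp e k.+1) (m := l - a)); last first.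
  by move=> e; rewrite inE => /andP[/exps_bound[_ ?] /eqP ?]; lia.
apply: eq_bigr => b _; have b_lt := ltn_ord b.
by rewrite -(@card_fiber M r l) //; lia.
Qed.

Local Open Scope ring_scope.

Lemma exchange_big_nat_triangle (R : nmodType) n (a b : nat -> nat) (F : nat -> nat -> R) :
  (forall i, 0 < i < n -> a i <= n)%N -> (forall j, 0 < j < n -> b j <= n)%N ->
  (forall i j, 0 < i < n -> 0 < j < n -> (j < a i) = (i < b j))%N ->
  \sum_(1 <= i < n) \sum_(1 <= j < a i) F i j = \sum_(1 <= j < n) \sum_(1 <= i < b j) F i j.
Proof.
move=> a_le b_le ab.
transitivity (\sum_(1 <= i < n) \sum_(1 <= j < n) if (j < a i)%N then F i j else 0).
  apply: eq_big_nat => i i_range.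
  by rewrite (big_nat_widen _ _ _ _ _ (a_le i i_range)) big_mkcond.
rewrite exchange_big_nat; apply: eq_big_nat => j j_range.
rewrite (big_nat_widen _ _ _ _ _ (b_le j j_range)) [RHS]big_mkcond.
by apply: eq_big_nat => i i_range; rewrite ab.
Qed.

Definition sshift (R : nzRingType) (e : nat) (g : nat -> R) : nat -> R :=
  fun n => if (e <= n)%N then g (n - e)%N else 0.

Section Series.
Variable R : nzRingType.
Implicit Types f g : nat -> R.

Lemma eq_smull f f' g n : f =1 f' -> smul f g n = smul f' g n.
Proof. by move=> ff'; apply: eq_bigr => a _; rewrite ff'. Qed.

Lemma eq_smulr f g g' n : g =1 g' -> smul f g n = smul f g' n.
Proof. by move=> gg'; apply: eq_bigr => a _; rewrite gg'. Qed.

Lemma eq_sshift e g g' n : g =1 g' -> sshift e g n = sshift e g' n.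
Proof. by move=> gg'; rewrite /sshift gg'. Qed.

Lemma smul_saddl f1 f2 g n : smul (sadd f1 f2) g n = smul f1 g n + smul f2 g n.
Proof. by rewrite -big_split; apply: eq_bigr => a _; rewrite mulrDl. Qed.

Lemma smul_saddr f g1 g2 n : smul f (sadd g1 g2) n = smul f g1 n + smul f g2 n.
Proof. by rewrite -big_split; apply: eq_bigr => a _; rewrite mulrDr. Qed.

Lemma smul0l g n : smul (szero R) g n = 0.
Proof. by rewrite /smul big1 // => a _; rewrite mul0r. Qed.

Lemma smul_suml (I : Type) (s : seq I) (P : pred I) (F : I -> nat -> R) g n :
  smul (fun m => \sum_(i <- s | P i) F i m) g n = \sum_(i <- s | P i) smul (F i) g n.
Proof. by rewrite /smul exchange_big; apply: eq_bigr => a _; rewrite mulr_suml. Qed.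

Lemma smul_sumr (I : Type) (s : seq I) (P : pred I) f (G : I -> nat -> R) n :
  smul f (fun m => \sum_(i <- s | P i) G i m) n = \sum_(i <- s | P i) smul f (G i) n.
Proof. by rewrite /smul exchange_big; apply: eq_bigr => a _; rewrite mulr_sumr. Qed.

Lemma sshift_sum (I : Type) (s : seq I) (P : pred I) e (G : I -> nat -> R) n :
  sshift e (fun m => \sum_(i <- s | P i) G i m) n = \sum_(i <- s | P i) sshift e (G i) n.
Proof. by rewrite /sshift; case: (leqP e n) => // _; rewrite big1. Qed.

Lemma smul_qpow e g n : smul (qpow R e) g n = sshift e g n.
Proof.
rewrite /smul /sshift /qpow; case: leqP => [e_le | n_lt].
  rewrite (bigD1 (Ordinal (e_le : (e < n.+1)%N))) //= eqxx mul1r big1 ?addr0 // => a.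
  by rewrite -val_eqE /= => /negbTE ->; rewrite mul0r.
rewrite big1 // => a _; have a_lt := ltn_ord a.
by rewrite (_ : (a == e :> nat) = false) ?mul0r //; lia.
Qed.

Lemma smul_sshiftr e f g n : smul f (sshift e g) n = sshift e (smul f g) n.
Proof.
rewrite /smul /sshift; case: leqP => [e_le | n_lt]; last first.
  by rewrite big1 // => a _; have a_lt := ltn_ord a; rewrite ifF ?mulr0 //; lia.
rewrite [RHS](big_ord_widen n.+1 (fun a => f a * g (n - e - a)%N)); last first.
  by rewrite ltnS leq_subr.
rewrite [RHS]big_mkcond; apply: eq_bigr => a _; have a_lt := ltn_ord a.
rewrite (_ : (e <= n - a)%N = (a < (n - e).+1)%N); last lia.
by case: ifP => _; rewrite ?mulr0 // subnAC.
Qed.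

Lemma smul_sshiftl e f g n : smul (sshift e f) g n = sshift e (smul f g) n.
Proof.
rewrite /smul /sshift.
transitivity (\sum_(0 <= a < n.+1) (if (e <= a)%N then f (a - e)%N else 0) * g (n - a)%N).
  by rewrite big_mkord.
case: (leqP e n) => [e_le | n_lt]; last first.
  rewrite big1_seq // => a; rewrite mem_index_iota => /andP[_ a_lt].
  by rewrite ifF ?mul0r //; lia.
rewrite (big_cat_nat (n := e)) //=; last lia.
rewrite big1_seq ?add0r => [|a]; last first.
  by rewrite mem_index_iota => /andP[_ a_lt]; rewrite ifF ?mul0r //; lia.
rewrite -{1}[e]add0n big_addn subSn // big_mkord; apply: eq_bigr => a _.
by rewrite leq_addl addnK subnDA subnAC.
Qed.

End Series.

Lemma HP_rec (R : nzRingType) r k l : (1 < r)%N -> (0 < l <= r)%N -> odd k ->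
  HP R r k l =1 sadd
    (fun n => \sum_(1 <= m < l.+1) sshift (k.+1 * (m - 1)) (HP R r k.+2 (r - m + 1)) n)
    (fun n => \sum_(1 <= m < l) sshift (k.+1 * m - 1) (HP R r k.+2 (r - m + 1)) n).
Proof.
move=> r_gt1 l_range k_odd n.
rewrite /HP /sadd hpcoef_rec // !big_ord_recl big_ord0 addn0 natrD !natr_sum /=.
rewrite !big_add1 /= !big_mkord subn1 subn0 /bump /= muln0 muln1.
congr (_ + _); apply: eq_bigr => b _; have b_lt := ltn_ord b; rewrite /sshift.
  by rewrite subn1 /= add0n (_ : (r - b.+1 + 1 = r - b)%N); [case: ifP | lia].
rewrite (_ : (k.+1 * b.+1 - 1 = k + k.+1 * b)%N); last by nia.
by rewrite (_ : (r - b.+1 + 1 = r - b)%N); [case: ifP | lia].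
Qed.

Lemma odd_double_addn1 n : odd (2 * n + 1).
Proof. by rewrite addn1 /= mul2n odd_double. Qed.

Lemma HP_expansion_base (R : nzRingType) J r i n : (1 < r)%N -> (0 < i <= r)%N ->
  HP R r (2 * J + 1) i n =
  \sum_(1 <= j < r.+1) smul (Nser R r i J 0 j) (HP R r (2 * (J.+1 + 0) + 1) (r - j + 1)) n.
Proof.
move=> r_gt1 i_range; set k := (2 * J + 1)%N.
have k_odd : odd k by rewrite /k odd_double_addn1.
rewrite (_ : (2 * (J.+1 + 0) + 1 = k.+2)%N) ?HP_rec //; try lia.
rewrite /sadd (big_nat_widen 1 i.+1 r.+1) ?(big_nat_widen 1 i r.+1); try lia.
rewrite [X in X + _]big_mkcond [X in _ + X]big_mkcond -big_split.
apply: eq_big_nat => j j_range /=; rewrite ltnS (_ : (2 * J.+1 = k.+1)%N); last lia.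
case: (ltngtP j i) => [j_lt | i_lt | ->].
- by rewrite smul_saddl !smul_qpow addrC.
- by rewrite smul0l addr0.
- by rewrite smul_qpow addr0.
Qed.

Lemma HP_expansion (R : nzRingType) J r i s n : (1 < r)%N -> (0 < i <= r)%N ->
  HP R r (2 * J + 1) i n =
  \sum_(1 <= j < r.+1) smul (Nser R r i J s j) (HP R r (2 * (J.+1 + s) + 1) (r - j + 1)) n.
Proof.
move=> r_gt1 i_range; elim: s n => [|s IHs] n; first exact: HP_expansion_base.
rewrite IHs; set d := (J.+1 + s)%N; set k := (2 * d + 1)%N.
have k_odd : odd k by rewrite /k odd_double_addn1.
rewrite (_ : (2 * (J.+1 + s.+1) + 1 = k.+2)%N); last by rewrite /k /d; lia.
pose T j m e := sshift e (smul (Nser R r i J s j) (HP R r k.+2 (r - m + 1))) n.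
transitivity (\sum_(1 <= j < r.+1)
                (\sum_(1 <= m < (r - j + 1).+1) T j m (k.+1 * (m - 1))%N
                 + \sum_(1 <= m < r - j + 1) T j m (k.+1 * m - 1)%N)).
  apply: eq_big_nat => j j_range.
  rewrite (eq_smulr _ _ (HP_rec R r_gt1 (_ : (0 < r - j + 1 <= r)%N) k_odd)); last lia.
  rewrite smul_saddr !smul_sumr.
  by congr (_ + _); apply: eq_bigr => m _; rewrite smul_sshiftr.
rewrite big_split /=.
rewrite (exchange_big_nat_triangle (a := fun j => (r - j + 1).+1%N)
                                   (b := fun m => (r - m + 1).+1%N)); try lia.
rewrite (exchange_big_nat_triangle (a := fun j => (r - j + 1)%N)
                                   (b := fun m => (r - m).+1%N)); try lia.
rewrite -big_split; apply: eq_big_nat => m m_range /=.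
rewrite -/d (_ : (2 * d.+1 = k.+1)%N); last by rewrite /k; lia.
rewrite smul_saddl; congr (_ + _);
  by rewrite (eq_smull _ _ (smul_qpow _ _)) smul_sshiftl
             (eq_sshift _ _ (smul_suml _ _ _ _)) sshift_sum.
Qed.

Unset Implicit Arguments.

Theorem lemma2p2 (F : fieldType) (charF0 : [pchar F] =i pred0)
  (J r i : nat) (hr : (2 <= r)%N) (hi1 : (1 <= i)%N) (hir : (i <= r)%N)
  (d : nat) (hd : (J.+1 <= d)%N) :
  forall n : nat,
    HP F r (2 * J + 1) i n =
    \sum_(1 <= j < r.+1) smul (NJ F r i J d j) (HP F r (2 * d + 1) (r - j + 1)) n.
Proof.
move=> n; rewrite (@HP_expansion F J r i (d - J.+1)) ?subnKC //; exact/andP.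
Qed.
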